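(* Let $\mathbb{M}$ be $\mathbb{T}^{n}$ or $\mathbb{S}^{n}$ and let $X$ be a polynomic vector field on $\mathbb{M}$. Then there exist a smooth embedding $\Psi: \mathbb{M} \rightarrow \mathbb{R}^{d}$, with $d$ depending only on $n$ and on the degree of $X$, and a homogeneous quadratic ODE on $\mathbb{R}^{d}$ \[ \frac{d y_i}{dt}=\sum_{j,k=1}^d B_{ijk} y_j y_k, \quad i=1,\dots,d, \] with real coefficients satisfying $B_{ijk}=-B_{kji}$ for all $i,j,k$, such that for every $x \in \mathbb{M}$, $y(t)=\Psi(\phi^{t}_{X}(x))$ is the solution of this ODE with initial condition $y(0)=\Psi(x)$ (here $\phi^t_X$ is the flow of $X$). Moreover, if $X$ is divergence-free on $\mathbb{M}$ (with respect to the round metric on $\mathbb{S}^n$, or the flat metric on $\mathbb{T}^{n}$), then the quadratic vector field $V(y)=\sum_{i,j,k} B_{ijk} y_j y_k \frac{\partial}{\partial y_i}$ is divergence-free on $\mathbb{R}^d$ with respect to the standard Euclidean metric.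
   Context: $\mathbb{T}^n=(\mathbb{R}/\mathbb{Z})^n$ and $\mathbb{S}^n\subset\mathbb{R}^{n+1}$ is the unit sphere. A vector field on $\mathbb{T}^n$ is called polynomic if it is a finite sum $\sum_k a_k\sin(2\pi k\cdot x)+b_k\cos(2\pi k\cdot x)$ with $k\in\mathbb{Z}^n$, $a_k,b_k\in\mathbb{R}^n$; its degree is the squared modulus $|k|^2$ of the highest frequency occurring. A vector field on $\mathbb{S}^n$ is called polynomic if it is the restriction of a polynomial vector field on $\mathbb{R}^{n+1}$ tangent to $\mathbb{S}^n$; its degree is the degree of that polynomial. *)

From HB Require Import structures.
From mathcomp Require Import all_boot all_order all_algebra.
From mathcomp Require Import all_classical all_reals all_analysis.
Set Implicit Arguments. Unset Strict Implicit. Unset Printing Implicit Defensive.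
Import Order.TTheory GRing.Theory Num.Theory.
Import numFieldNormedType.Exports.
Local Open Scope ring_scope.

Section Defs.
Variable R : realType.

Definition dotv (m : nat) (u v : 'rV[R]_m) : R := \sum_i u 0 i * v 0 i.
Definition ebasis (m : nat) (i : 'I_m) : 'rV[R]_m := delta_mx 0 i.

Fixpoint Ck (m p : nat) (k : nat) (f : 'rV[R]_m -> 'rV[R]_p) : Prop :=
  match k with
  | 0 => continuous f
  | k'.+1 => (forall x, differentiable f x) /\
             (forall v : 'rV[R]_m, Ck k' (fun x => 'D_v f x))
  end.
Definition smooth (m p : nat) (f : 'rV[R]_m -> 'rV[R]_p) : Prop :=
  forall k, Ck k f.

Definition divergence (m : nat) (F : 'rV[R]_m -> 'rV[R]_m) (x : 'rV[R]_m) : R :=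
  \sum_i ('D_(ebasis i) F x) 0 i.

(* Objects on T^n are represented by Z^n-periodic objects on R^n. *)
Definition int_vec (n : nat) (z : 'rV[R]_n) : Prop := forall i, z 0 i \is a Num.int.

Definition torus_polynomic_le (n N : nat) (X : 'rV[R]_n -> 'rV[R]_n) : Prop :=
  exists s : seq (('I_n -> int) * 'rV[R]_n * 'rV[R]_n),
    all (fun p => (\sum_i `|p.1.1 i|%N ^ 2 <= N)%N) s /\
    forall x : 'rV[R]_n,
      X x = \sum_(p <- s)
              (sin (2 * pi * \sum_i (p.1.1 i)%:~R * x 0 i) *: p.1.2 +
               cos (2 * pi * \sum_i (p.1.1 i)%:~R * x 0 i) *: p.2).

(* Smooth embedding T^n -> R^d, given as a Z^n-periodic smooth map on R^n
   that is injective modulo Z^n and an immersion (T^n is compact, so an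
   injective immersion is an embedding). *)
Definition torus_embedding (n d : nat) (Psi : 'rV[R]_n -> 'rV[R]_d) : Prop :=
  [/\ smooth Psi,
      (forall x z, int_vec z -> Psi (x + z) = Psi x),
      (forall x y, Psi x = Psi y -> int_vec (x - y)) &
      (forall x v, 'D_v Psi x = 0 -> v = 0)].

Definition integral_curve (n : nat) (X : 'rV[R]_n -> 'rV[R]_n) (g : R -> 'rV[R]_n)
  : Prop := forall t : R, is_derive t 1 g (X (g t)).

Definition torus_div_free (n : nat) (X : 'rV[R]_n -> 'rV[R]_n) : Prop :=
  forall x, divergence X x = 0.

Definition on_sphere (n : nat) (x : 'rV[R]_n.+1) : Prop := dotv x x = 1.

Definition monom (m : nat) (alpha : 'I_m -> nat) (x : 'rV[R]_m) : R :=
  \prod_i x 0 i ^+ alpha i.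
Definition poly_field_le (m N : nat) (X : 'rV[R]_m -> 'rV[R]_m) : Prop :=
  exists s : seq ('rV[R]_m * ('I_m -> nat)),
    all (fun p => (\sum_i p.2 i <= N)%N) s /\
    forall x, X x = \sum_(p <- s) monom p.2 x *: p.1.

Definition sphere_polynomic_le (n N : nat) (X : 'rV[R]_n.+1 -> 'rV[R]_n.+1) : Prop :=
  poly_field_le N X /\ (forall x, on_sphere x -> dotv x (X x) = 0).

(* Smooth embedding S^n -> R^d, given as (the restriction of) a smooth map
   on R^(n+1), injective on S^n, whose differential is injective on the
   tangent spaces T_x S^n = x^perp (S^n compact: injective immersion). *)
Definition sphere_embedding (n d : nat) (Psi : 'rV[R]_n.+1 -> 'rV[R]_d) : Prop :=
  [/\ smooth Psi,
      (forall x y, on_sphere x -> on_sphere y -> Psi x = Psi y -> x = y) &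
      (forall x v, on_sphere x -> dotv x v = 0 -> 'D_v Psi x = 0 -> v = 0)].

Definition sphere_integral_curve (n : nat) (X : 'rV[R]_n.+1 -> 'rV[R]_n.+1)
  (g : R -> 'rV[R]_n.+1) : Prop :=
  forall t : R, on_sphere (g t) /\ is_derive t 1 g (X (g t)).

(* Riemannian divergence on S^n (round metric) of a tangent field X given
   as the restriction of an ambient field: div_S X (x) = sum over an
   orthonormal basis e_a of T_x S^n of <D_{e_a} X, e_a>, i.e. the ambient
   trace of DX(x) minus its normal component <DX(x) x, x>. *)
Definition sphere_divergence (n : nat) (X : 'rV[R]_n.+1 -> 'rV[R]_n.+1)
  (x : 'rV[R]_n.+1) : R := divergence X x - dotv ('D_x X x) x.

Definition sphere_div_free (n : nat) (X : 'rV[R]_n.+1 -> 'rV[R]_n.+1) : Prop :=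
  forall x, on_sphere x -> sphere_divergence X x = 0.

Definition skewB (d : nat) (B : 'I_d -> 'I_d -> 'I_d -> R) : Prop :=
  forall i j k, B i j k = - B k j i.

Definition quadV (d : nat) (B : 'I_d -> 'I_d -> 'I_d -> R) (y : 'rV[R]_d)
  : 'rV[R]_d := \row_i (\sum_j \sum_k B i j k * y 0 j * y 0 k).

End Defs.

(* If finitely many functions phi_I on M satisfy
     D_X phi_I = sum_K (sum_J c_IKJ phi_J) phi_K   with c_IKJ = - c_KIJ,
   then Psi = (phi, phi), made of two copies of the phi_I, maps the trajectories
   of X to solutions of y'_(b,I) = sum_(J,K) c_IKJ y_(~~b,J) y_(b,K).  These
   coefficients satisfy B_ijk = - B_kji, and the equation for y_i does not
   involve y_i, so the quadratic field is divergence-free whatever X is.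
   On T^n the phi_I are sin and cos of 2 pi k.x for k in a box: differentiating
   along X multiplies them by -+ 2 pi k.X, which is linear in the same functions.
   On S^n they are the words x_(i_1) ... x_(i_e) of length e <= N+1: since X is
   tangent and |x| = 1, X_i = sum_k (X_i x_k - X_k x_i) x_k, and the bracket
   X_i x_k - X_k x_i is antisymmetric in i, k and linear in words.  The
   functions sin and cos of 2 pi x_i, respectively the coordinates x_i, make
   Psi an embedding. *)

From HB Require Import structures.
From mathcomp Require Import all_boot all_order all_algebra.
From mathcomp Require Import all_classical all_reals all_analysis.
From mathcomp Require Import ring lra zify.
Set Implicit Arguments. Unset Strict Implicit. Unset Printing Implicit Defensive.
Import Order.TTheory GRing.Theory Num.Theory.
Import numFieldNormedType.Exports.
Local Open Scope ring_scope.

Section Calculus.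
Variable R : realType.

Lemma derive_line_cst (V W : normedModType R) (f : V -> W) a v :
  (forall h : R, f (h *: v + a) = f a) -> 'D_v f a = 0.
Proof.
move=> fcst; rewrite /derive.
have -> : (fun h : R => h^-1 *: ((f \o shift a) (h *: v) - f a)) = cst 0.
  by apply/funext => h /=; rewrite fcst subrr scaler0.
exact: cvg_lim (cvg_cst _).
Qed.

Lemma derive_coord m p (x v : 'M[R]_(m, p)) i j :
  'D_v (fun y : 'M[R]_(m, p) => y i j) x = v i j.
Proof.
have := derive_mx (M := (id : _ -> 'M[R]_(m, p))) (@derivable_id _ _ x v).
by rewrite derive_id => /matrixP/(_ i j); rewrite mxE => <-.
Qed.

Lemma is_derive_comp (V W : normedModType R) (f : V -> W) (g : R -> V) t dg :
  differentiable f (g t) -> is_derive t 1 g dg ->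
  is_derive t 1 (f \o g) ('D_dg f (g t)).
Proof.
move=> df [dg1 <-].
have dgt : differentiable g t by apply/derivable1_diffP.
have dfg : differentiable (f \o g) t by apply: differentiable_comp.
apply: DeriveDef; first exact/derivable1_diffP.
by rewrite deriveE // diff_comp // deriveE //= deriveE.
Qed.

Lemma is_derive_mx (V : normedModType R) m p (F : V -> 'M[R]_(m, p)) t v
    (L : 'M[R]_(m, p)) :
  (forall i j, is_derive t v (fun s => F s i j) (L i j)) -> is_derive t v F L.
Proof.
move=> dF; have dFt : derivable F t v by apply/derivable_mxP => i j; case: (dF i j).
apply: DeriveDef => //; rewrite derive_mx //; apply/matrixP => i j.
by rewrite mxE; case: (dF i j).
Qed.

Lemma differentiable_row (V : normedModType R) p (F : 'I_p -> V -> R) x :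
  (forall i, differentiable (F i) x) ->
  differentiable (fun y => \row_i F i y : 'rV[R]_p) x.
Proof.
move=> dF; have -> : (fun y => \row_i F i y : 'rV[R]_p) =
    \sum_(i < p) (fun y => F i y *: (delta_mx 0 i : 'rV[R]_p)).
  apply/funext => y; rewrite fct_sumE {1}[\row_i F i y]row_sum_delta.
  by apply: eq_bigr => i _; rewrite mxE.
by apply: differentiable_sum => i; exact: differentiableZl.
Qed.

Lemma derive_row (V : normedModType R) p (F : 'I_p -> V -> R) x v :
  (forall i, differentiable (F i) x) ->
  'D_v (fun y => \row_i F i y : 'rV[R]_p) x = \row_i 'D_v (F i) x.
Proof.
move=> dF; rewrite derive_mx; last exact/diff_derivable/differentiable_row.
by apply/rowP => j; rewrite !mxE; under eq_fun do rewrite mxE.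
Qed.

Lemma derive_comp_scalar (V : normedModType R) (h : R -> R) (f : V -> R) x dh :
  is_derive (f x) 1 h dh -> differentiable f x ->
  forall v, 'D_v (h \o f) x = dh * 'D_v f x.
Proof.
move=> hdh df v; have dh1 : differentiable h (f x) by apply/derivable1_diffP; case: hdh.
rewrite deriveE; last exact: differentiable_comp.
rewrite diff_comp //= diff1E // derive1E (@derive_val _ _ _ _ _ _ _ hdh).
by rewrite deriveE // mulrC.
Qed.

Lemma derive_prod (V : normedModType R) (I : eqType) (s : seq I) (f : I -> V -> R) x v :
  uniq s -> (forall i, differentiable (f i) x) ->
  'D_v (fun y => \prod_(i <- s) f i y) x =
  \sum_(i <- s) 'D_v (f i) x * \prod_(j <- s | j != i) f j x.
Proof.
move=> + df; elim: s => [|a s IH] /=.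
  by under eq_fun do rewrite big_nil; rewrite derive_cst big_nil.
move=> /andP[a_notin_s us].
have dprod : differentiable (fun y => \prod_(i <- s) f i y) x.
  rewrite -fct_prodE; elim: s {a_notin_s us IH} => [|b s IHs]; rewrite ?big_nil ?big_cons.
    exact: differentiable_cst.
  exact: differentiableM.
rewrite (_ : (fun y => _) = f a * (fun y => \prod_(i <- s) f i y)); last first.
  by apply/funext => y; rewrite big_cons.
rewrite deriveM; [|exact: diff_derivable|exact: diff_derivable].
rewrite IH // !big_cons eqxx /= addrC /GRing.scale /= mulrC; congr (_ + _).
  congr (_ * _); rewrite [RHS]big_seq_cond [LHS]big_seq; apply: eq_bigl => j.
  by case: (boolP (j \in s)) => //= js; symmetry; apply: contraNneq a_notin_s => <-.
rewrite mulr_sumr !big_seq; apply: eq_bigr => i si.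
rewrite big_cons (_ : (a != i) = true) 1?mulrCA //.
by apply: contraNneq a_notin_s => ->.
Qed.

End Calculus.

Inductive elementary (R : realType) (m : nat) : ('rV[R]_m -> R) -> Prop :=
| elementary_cst a : elementary (fun _ => a)
| elementary_coord i : elementary (fun x => x 0 i)
| elementary_add f g : elementary f -> elementary g -> elementary (fun x => f x + g x)
| elementary_mul f g : elementary f -> elementary g -> elementary (fun x => f x * g x)
| elementary_cos f : elementary f -> elementary (fun x => cos (f x))
| elementary_sin f : elementary f -> elementary (fun x => sin (f x)).

Section Elementary.
Variables (R : realType) (m : nat).
Implicit Types f g : 'rV[R]_m -> R.

Lemma elementary_sum (I : Type) (r : seq I) (F : I -> 'rV[R]_m -> R) :
  (forall i, elementary (F i)) -> elementary (fun x => \sum_(i <- r) F i x).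
Proof.
move=> eF; elim: r => [|a r IH].
  by under eq_fun do rewrite big_nil; exact: elementary_cst.
by under eq_fun do rewrite big_cons; exact: elementary_add.
Qed.

Lemma elementary_prod (I : Type) (r : seq I) (F : I -> 'rV[R]_m -> R) :
  (forall i, elementary (F i)) -> elementary (fun x => \prod_(i <- r) F i x).
Proof.
move=> eF; elim: r => [|a r IH].
  by under eq_fun do rewrite big_nil; exact: elementary_cst.
by under eq_fun do rewrite big_cons; exact: elementary_mul.
Qed.

Lemma elementary_differentiable f x : elementary f -> differentiable f x.
Proof.
move=> ef; elim: ef x => {f} [a|i|f g _ df _ dg|f g _ df _ dg|f _ df|f _ df] x.
- exact: differentiable_cst.
- exact: differentiable_coord.
- exact: (differentiableD (df x) (dg x)).
- exact: (differentiableM (df x) (dg x)).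
- exact/(differentiable_comp (df x))/derivable1_diffP/derivable_cos.
- exact/(differentiable_comp (df x))/derivable1_diffP/derivable_sin.
Qed.

Lemma elementary_derive f v : elementary f -> elementary (fun x => 'D_v f x).
Proof.
have ed := elementary_differentiable.
elim => {f} [a|i|f g ef Hf eg Hg|f g ef Hf eg Hg|f ef Hf|f ef Hf].
- by under eq_fun do rewrite derive_cst; exact: elementary_cst.
- by under eq_fun do rewrite derive_coord; exact: elementary_cst.
- rewrite (_ : (fun x => _) = fun x => 'D_v f x + 'D_v g x).
    exact: elementary_add.
  by apply/funext => x; rewrite (_ : (fun y => f y + g y) = f + g) // deriveD //;
    exact/diff_derivable/ed.
- rewrite (_ : (fun x => _) = fun x => f x * 'D_v g x + g x * 'D_v f x).
    by apply: elementary_add; apply: elementary_mul.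
  by apply/funext => x; rewrite (_ : (fun y => f y * g y) = f * g) // deriveM //;
    exact/diff_derivable/ed.
- rewrite (_ : (fun x => _) = fun x => (- 1) * sin (f x) * 'D_v f x).
    by do 2!apply: elementary_mul => //; [exact: elementary_cst|exact: elementary_sin].
  by apply/funext => x; rewrite (derive_comp_scalar (is_derive_cos _)) ?mulN1r //;
    exact: ed.
- rewrite (_ : (fun x => _) = fun x => cos (f x) * 'D_v f x).
    by apply: elementary_mul => //; exact: elementary_cos.
  by apply/funext => x; rewrite (derive_comp_scalar (is_derive_sin _)) //; exact: ed.
Qed.

Lemma smooth_row_elementary p (F : 'I_p -> 'rV[R]_m -> R) :
  (forall i, elementary (F i)) -> smooth (fun x => \row_i F i x : 'rV[R]_p).
Proof.
move=> eF k; elim: k F eF => [|k IH] F eF.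
  move=> x; apply/differentiable_continuous/differentiable_row => i.
  exact: elementary_differentiable.
have dF x i : differentiable (F i) x by exact: elementary_differentiable.
split=> [x|v]; first exact: differentiable_row.
under eq_fun => x do rewrite derive_row //.
by apply: (IH (fun i x => 'D_v (F i) x)) => i; exact: elementary_derive.
Qed.

End Elementary.

Lemma sum_pair (R : nmodType) (A B : finType) (F : A * B -> R) :
  \sum_s F s = \sum_(a : A) \sum_(b : B) F (a, b).
Proof. by rewrite pair_bigA; apply: eq_bigr => -[]. Qed.

Lemma sum_indicator (R : pzSemiRingType) (U : finType) (a : U) (F : U -> R) :
  \sum_K (K == a)%:R * F K = F a.
Proof.
rewrite (bigD1 a) //= eqxx mul1r big1 ?addr0 // => K /negbTE->; exact: mul0r.
Qed.

Section TwinLift.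
Variables (R : realType) (m : nat) (T : finType).
Variables (phi : T -> 'rV[R]_m -> R) (c : T -> T -> T -> R).
Hypothesis phi_elementary : forall I, elementary (phi I).
Hypothesis c_skew : forall I K J, c I K J = - c K I J.

Local Notation d := #|{: bool * T}|.

Definition twin_index (i : 'I_d) : bool * T := enum_val i.

Definition twin_map (x : 'rV[R]_m) : 'rV[R]_d := \row_i phi (twin_index i).2 x.

Definition twin_coef (i j k : 'I_d) : R :=
  if ((twin_index k).1 == (twin_index i).1) &&
     ((twin_index j).1 != (twin_index i).1)
  then c (twin_index i).2 (twin_index k).2 (twin_index j).2 else 0.

Lemma sum_twin (F : bool * T -> R) :
  \sum_j F (twin_index j) = \sum_(b : bool) \sum_(J : T) F (b, J).
Proof. by rewrite -(big_enum_val (A := predT)) sum_pair. Qed.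

Lemma twin_indexK s : twin_index (enum_rank s) = s.
Proof. exact: enum_rankK. Qed.

Lemma c_diag I J : c I I J = 0.
Proof.
by have /eqP := c_skew I I J; rewrite -subr_eq0 opprK -mulr2n mulrn_eq0 => /eqP.
Qed.

Lemma twin_coef_skew : skewB twin_coef.
Proof.
move=> i j k; rewrite /twin_coef [(twin_index i).1 == _]eq_sym.
case: eqP => [->|_] /=; last by rewrite oppr0.
by case: ifP => _; rewrite ?oppr0.
Qed.

Lemma twin_coef_diag i j k : (j == i) || (k == i) -> twin_coef i j k = 0.
Proof.
rewrite /twin_coef => /orP[]/eqP->; first by rewrite eqxx andbF.
by case: ifP => // _; rewrite c_diag.
Qed.

Lemma quadV_twin_coefD i (y : 'rV[R]_d) h :
  quadV twin_coef (h *: ebasis R i + y) 0 i = quadV twin_coef y 0 i.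
Proof.
rewrite !mxE; apply: eq_bigr => j _; apply: eq_bigr => k _.
have [ji|] := boolP (j == i); first by rewrite twin_coef_diag ?ji // !mul0r.
have [ki|] := boolP (k == i); first by rewrite twin_coef_diag ?ki ?orbT // !mul0r.
by move=> /negbTE ki /negbTE ji; rewrite !mxE ki ji !andbF !mulr0 !add0r.
Qed.

Lemma divergence_quadV_twin y : divergence (quadV twin_coef) y = 0.
Proof.
have eV i :
    elementary (fun y : 'rV[R]_d => \sum_j \sum_k twin_coef i j k * y 0 j * y 0 k).
  do 2!apply: elementary_sum => ?.
  apply: elementary_mul; last exact: elementary_coord.
  by apply: elementary_mul; [exact: elementary_cst|exact: elementary_coord].
apply: big1 => i _; rewrite derive_row => [|l]; last exact: elementary_differentiable.
rewrite mxE; apply: derive_line_cst => h.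
by have := quadV_twin_coefD i y h; rewrite !mxE.
Qed.

Lemma quadV_twin_map x i :
  quadV twin_coef (twin_map x) 0 i =
  \sum_K (\sum_J c (twin_index i).2 K J * phi J x) * phi K x.
Proof.
rewrite mxE /twin_coef; case: (twin_index i) => b I /=.
pose F (s1 s2 : bool * T) :=
  (if (s2.1 == b) && (s1.1 != b) then c I s2.2 s1.2 else 0) * phi s1.2 x * phi s2.2 x.
transitivity (\sum_j \sum_k F (twin_index j) (twin_index k)).
  by apply: eq_bigr => j _; apply: eq_bigr => k _; rewrite !mxE.
have inner s : \sum_k F s (twin_index k) = \sum_(b' : bool) \sum_K F s (b', K).
  exact: sum_twin.
rewrite (sum_twin (fun s => \sum_k F s (twin_index k))) /=.
under eq_bigr do under eq_bigr do rewrite inner.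
have same_copy : \sum_J \sum_b' \sum_K F (b, J) (b', K) = 0.
  by do 3!(apply: big1 => ? _); rewrite /F eqxx andbF !mul0r.
have other_copy : \sum_J \sum_b' \sum_K F (~~ b, J) (b', K) =
                  \sum_J \sum_K c I K J * phi J x * phi K x.
  apply: eq_bigr => J _; rewrite (bigD1 b) //= [X in _ + X]big1 ?addr0.
    by apply: eq_bigr => K _; rewrite /F /= eqxx (_ : ~~ b != b) //; case: (b).
  by move=> b' /negbTE nb; apply: big1 => K _; rewrite /F /= nb !mul0r.
clearbody F; rewrite big_bool; case: b same_copy other_copy => /= -> ->.
all: rewrite ?add0r ?addr0 exchange_big; apply: eq_bigr => K _; rewrite mulr_suml.
all: by apply: eq_bigr => J _; rewrite mulrAC.
Qed.

Lemma is_derive_twin_map (g : R -> 'rV[R]_m) t dg :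
  (forall I, 'D_dg (phi I) (g t) =
             \sum_K (\sum_J c I K J * phi J (g t)) * phi K (g t)) ->
  is_derive t 1 g dg ->
  is_derive t 1 (twin_map \o g) (quadV twin_coef (twin_map (g t))).
Proof.
move=> Dphi dg1; apply: is_derive_mx => a j; rewrite ord1 quadV_twin_map -Dphi.
under eq_fun do rewrite /= mxE.
exact: is_derive_comp (elementary_differentiable _ _) dg1.
Qed.

Lemma twin_map_eq x y : twin_map x = twin_map y -> forall I, phi I x = phi I y.
Proof.
by move=> /rowP E I; have := E (enum_rank (true, I)); rewrite !mxE twin_indexK.
Qed.

Lemma derive_twin_map_eq0 x v :
  'D_v twin_map x = 0 -> forall I, 'D_v (phi I) x = 0.
Proof.
rewrite derive_row => [/rowP E I|i]; last exact: elementary_differentiable.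
by have := E (enum_rank (true, I)); rewrite !mxE twin_indexK.
Qed.

Lemma smooth_twin_map : smooth twin_map.
Proof. by apply: smooth_row_elementary => i; exact: phi_elementary. Qed.

End TwinLift.

Lemma periodicz (U V : zmodType) (f : U -> V) (T : U) :
  periodic f T -> forall (z : int) a, f (a + T *~ z) = f a.
Proof.
move=> fT [] k a; first exact: periodicn.
by have := periodicn fT k.+1 (a - T *+ k.+1); rewrite subrK NegzE mulrNz => <-.
Qed.

Section Trigonometry.
Variable R : realType.

Lemma two_pi_intr (z : int) : 2 * pi * z%:~R = (pi *+ 2) *~ z :> R.
Proof. by rewrite mulrzr mulr_natl. Qed.

Lemma cosD2piz (a : R) (z : int) : cos (a + 2 * pi * z%:~R) = cos a.
Proof. by rewrite two_pi_intr (periodicz (@cosD2pi R)). Qed.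

Lemma sinD2piz (a : R) (z : int) : sin (a + 2 * pi * z%:~R) = sin a.
Proof. by rewrite two_pi_intr (periodicz (@sinD2pi R)). Qed.

Lemma cos_eq1 (u : R) : cos u = 1 -> exists z : int, u = 2 * pi * z%:~R.
Proof.
move=> cu; have pi2_gt0 : 0 < 2 * pi :> R by rewrite mulr_gt0 ?pi_gt0.
pose z := Num.floor (u / (2 * pi)); exists z.
pose w := u - 2 * pi * z%:~R.
have w_ge0 : 0 <= w by rewrite subr_ge0 mulrC -ler_pdivlMr // floor_le.
have w_lt : w < 2 * pi.
  have := floorD1_gt (u / (2 * pi)); rewrite ltr_pdivrMr // intrD mulrDl mul1r.
  by rewrite /w -/z; set p := pi; set y := z%:~R; lra.
have cw : cos w = 1 by rewrite -(cosD2piz w z) subrK.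
suff w0 : w = 0 by rewrite -(subrK (2 * pi * z%:~R) u) -/w w0 add0r.
have cos_inj0 v : 0 <= v <= pi -> cos v = 1 -> v = 0.
  move=> /andP[v0 vpi] cv; apply: cos_inj; rewrite ?cos0 // in_itv /= ?v0 ?vpi //.
  by rewrite lexx pi_ge0.
have [wpi|piw] := lerP w pi; first by apply: cos_inj0; rewrite ?w_ge0.
suff : 2 * pi - w = 0 by set p := pi in piw w_lt *; lra.
apply: cos_inj0; first by apply/andP; split; set p := pi in piw w_lt *; lra.
by rewrite -cosN opprB -[RHS]cw -[in RHS](cosD2piz w (-1)) mulrN1 addrC.
Qed.

Lemma cos_sin_eq (a b : R) : cos a = cos b -> sin a = sin b ->
  exists z : int, a - b = 2 * pi * z%:~R.
Proof. by move=> ca sa; apply: cos_eq1; rewrite cosB ca sa -!expr2 cos2Dsin2. Qed.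

Lemma cos_sin_mul_eq0 (a t : R) : cos a * t = 0 -> sin a * t = 0 -> t = 0.
Proof.
move=> ct st; rewrite -[t]mul1r -(cos2Dsin2 a) mulrDl !expr2 -!mulrA ct st.
by rewrite !mulr0 addr0.
Qed.

End Trigonometry.

Section TorusModes.
Variables (R : realType) (n N : nat).

Definition phase (k : 'I_n -> int) (x : 'rV[R]_n) : R :=
  2 * pi * \sum_i (k i)%:~R * x 0 i.

Lemma phaseD k x y : phase k (x + y) = phase k x + phase k y.
Proof.
rewrite /phase -mulrDr -big_split; congr (_ * _); apply: eq_bigr => i _.
by rewrite mxE mulrDr.
Qed.

Lemma phaseZ k a x : phase k (a *: x) = a * phase k x.
Proof.
rewrite /phase [RHS]mulrCA [in RHS]mulr_sumr; congr (_ * _); apply: eq_bigr => i _.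
by rewrite mxE mulrCA.
Qed.

Lemma phase_sum k (I : Type) (r : seq I) (F : I -> 'rV[R]_n) :
  phase k (\sum_(i <- r) F i) = \sum_(i <- r) phase k (F i).
Proof.
elim: r => [|a r IH]; last by rewrite !big_cons phaseD IH.
by rewrite !big_nil /phase big1 ?mulr0 // => i _; rewrite mxE mulr0.
Qed.

Lemma elementary_phase k : elementary (phase k).
Proof.
apply: (elementary_mul (elementary_cst _ _)); apply: elementary_sum => i.
exact: elementary_mul (elementary_cst _ _) (elementary_coord _ _).
Qed.

Lemma derive_phase k x v : 'D_v (phase k) x = phase k v.
Proof.
have dcoord i : derivable (fun y : 'rV[R]_n => y 0 i) x v.
  exact/diff_derivable/differentiable_coord.
have -> : phase k =
    (2 * pi : R) \*o \sum_(i < n) (fun y : 'rV[R]_n => (k i)%:~R * y 0 i).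
  by apply/funext => y; rewrite /phase /= fct_sumE.
rewrite deriveMl; last by apply: derivable_sum => i; exact: derivableM.
rewrite derive_sum => [|i]; last exact: derivableM.
rewrite fct_sumE; congr (_ * _); apply: eq_bigr => i _.
rewrite (deriveMl (f := fun y : 'rV[R]_n => y 0 i)) //.
by congr (_ * _); exact: derive_coord.
Qed.

(* Frequencies range over the box [-(N+1), N+1]^n, which contains the
   frequencies of X (|k_i| <= N) and the unit vectors. *)
Definition freq := {ffun 'I_n -> 'I_(N.+1).*2.+1}.

Definition freq_val (l : freq) (i : 'I_n) : int := (l i)%:Z - (N.+1)%:Z.

Definition freq_of (k : 'I_n -> int) : freq :=
  [ffun i => inord (absz (k i + (N.+1)%:Z))].

Lemma freq_ofK k : (forall i, (`|k i| <= N.+1)%N) -> freq_val (freq_of k) = k.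
Proof.
by move=> kN; apply/funext => i; have ki := kN i; rewrite /freq_val ffunE inordK; lia.
Qed.

Definition torus_mode (s : bool * freq) (x : 'rV[R]_n) : R :=
  if s.1 then sin (phase (freq_val s.2) x) else cos (phase (freq_val s.2) x).

Lemma elementary_torus_mode s : elementary (torus_mode s).
Proof.
case: s => [[] l]; [apply: elementary_sin|apply: elementary_cos].
all: exact: elementary_phase.
Qed.

Lemma derive_torus_mode_cos l x v :
  'D_v (torus_mode (false, l)) x = - sin (phase (freq_val l) x) * phase (freq_val l) v.
Proof.
rewrite (derive_comp_scalar (is_derive_cos _)) ?derive_phase //.
exact/elementary_differentiable/elementary_phase.
Qed.

Lemma derive_torus_mode_sin l x v :
  'D_v (torus_mode (true, l)) x = cos (phase (freq_val l) x) * phase (freq_val l) v.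
Proof.
rewrite (derive_comp_scalar (is_derive_sin _)) ?derive_phase //.
exact/elementary_differentiable/elementary_phase.
Qed.

End TorusModes.

Section TorusField.
Variables (R : realType) (n N : nat).
Variable s : seq (('I_n -> int) * 'rV[R]_n * 'rV[R]_n).
Hypothesis s_freq : all (fun p => (\sum_i `|p.1.1 i| ^ 2 <= N)%N) s.

Definition trig_field (x : 'rV[R]_n) : 'rV[R]_n :=
  \sum_(p <- s) (sin (phase p.1.1 x) *: p.1.2 + cos (phase p.1.1 x) *: p.2).

Definition phase_coef (l : freq n N) (J : bool * freq n N) : R :=
  \sum_(p <- s) (phase (freq_val l) p.1.2 * (J == (true, freq_of N p.1.1))%:R +
                 phase (freq_val l) p.2 * (J == (false, freq_of N p.1.1))%:R).

Lemma freq_bounded p i : p \in s -> (`|p.1.1 i| <= N.+1)%N.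
Proof.
move=> ps; have := allP s_freq p ps; rewrite (bigD1 i) //=.
by move=> /(leq_trans (leq_addr _ _)); move: `|_|%N => a; nia.
Qed.

Lemma phase_coef_sum l x :
  \sum_J phase_coef l J * torus_mode J x = phase (freq_val l) (trig_field x).
Proof.
rewrite /phase_coef /trig_field phase_sum.
under eq_bigr do rewrite mulr_suml.
rewrite exchange_big /= big_seq [RHS]big_seq; apply: eq_bigr => p ps.
under eq_bigr do rewrite mulrDl -!mulrA.
rewrite big_split -!mulr_sumr /= !sum_indicator /torus_mode /= freq_ofK; last first.
  by move=> i; exact: freq_bounded.
by rewrite phaseD !phaseZ /phase; ring.
Qed.

Definition rotation_sign (b b' : bool) : R :=
  if b == b' then 0 else if b then 1 else -1.

Definition torus_coef (s1 s2 J : bool * freq n N) : R :=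
  (s1.2 == s2.2)%:R * rotation_sign s1.1 s2.1 * phase_coef s1.2 J.

Lemma torus_coef_skew s1 s2 J : torus_coef s1 s2 J = - torus_coef s2 s1 J.
Proof.
rewrite /torus_coef eq_sym; case: eqP => [->|_]; last by rewrite !mul0r oppr0.
by case: s1 s2 => [[] ?] [[] ?];
  rewrite /rotation_sign /= ?mul1r ?mul0r ?mulN1r ?opprK ?oppr0.
Qed.

Lemma derive_torus_mode_field x b l :
  'D_(trig_field x) (torus_mode (b, l)) x =
  \sum_K (\sum_J torus_coef (b, l) K J * torus_mode J x) * torus_mode K x.
Proof.
have inner K : \sum_J torus_coef (b, l) K J * torus_mode J x =
    (K.2 == l)%:R * (rotation_sign b K.1 * phase (freq_val l) (trig_field x)).
  rewrite -phase_coef_sum !mulr_sumr; apply: eq_bigr => J _.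
  by rewrite /torus_coef eq_sym -!mulrA.
under eq_bigr do rewrite inner -mulrA.
rewrite sum_pair /=; under eq_bigr do rewrite sum_indicator.
rewrite big_bool /rotation_sign.
clear inner; case: b; rewrite ?derive_torus_mode_sin ?derive_torus_mode_cos /torus_mode /=.
all: ring.
Qed.

End TorusField.

Section TorusEmbedding.
Variables (R : realType) (n N : nat).

Definition unit_freq (i : 'I_n) : freq n N := freq_of N (fun j => (j == i)%:Z).

Lemma phase_unit_freq i (x : 'rV[R]_n) :
  phase (freq_val (unit_freq i)) x = 2 * pi * x 0 i.
Proof.
rewrite freq_ofK => [|j]; last by case: (j == i).
by rewrite /phase (bigD1 i) //= eqxx mul1r big1 ?addr0 // => j /negbTE->; rewrite mul0r.
Qed.

Lemma torus_mode_periodic (s : bool * freq n N) (x z : 'rV[R]_n) :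
  int_vec z -> torus_mode s (x + z) = torus_mode s x.
Proof.
move=> zZ; have /intrP[w Ew] : \sum_i (freq_val s.2 i)%:~R * z 0 i \is a Num.int.
  by apply: rpred_sum => i _; rewrite rpredM ?intr_int.
by rewrite /torus_mode phaseD /phase Ew -/(phase _ x) cosD2piz sinD2piz.
Qed.

Lemma torus_embedding_twin : torus_embedding (twin_map (@torus_mode R n N)).
Proof.
have mode_elem := @elementary_torus_mode R n N.
have pi2_neq0 : 2 * pi != 0 :> R by rewrite mulf_neq0 // gt_eqF // pi_gt0.
split.
- exact: smooth_twin_map.
- by move=> x z zZ; apply/rowP => j; rewrite !mxE torus_mode_periodic.
- move=> x y /(twin_map_eq (phi := @torus_mode R n N)) E i.
  have := E (false, unit_freq i); have := E (true, unit_freq i).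
  rewrite /torus_mode /= !phase_unit_freq => sxy cxy.
  have [z] := cos_sin_eq cxy sxy; rewrite -mulrBr => /(mulfI pi2_neq0) xyz.
  by rewrite !mxE xyz intr_int.
- move=> x v /(derive_twin_map_eq0 mode_elem) D0; apply/rowP => i; rewrite mxE.
  have := D0 (false, unit_freq i); have := D0 (true, unit_freq i).
  rewrite derive_torus_mode_sin derive_torus_mode_cos !phase_unit_freq mulNr.
  move=> ct /eqP; rewrite oppr_eq0 => /eqP st.
  by have /eqP := cos_sin_mul_eq0 ct st; rewrite mulf_eq0 (negbTE pi2_neq0) => /eqP.
Qed.

End TorusEmbedding.

Section Words.
Variables (R : realType) (n N : nat).

(* A word of length e <= N+1 in the letters 0..n; only its first e letters
   are read. *)
Definition word := ('I_N.+2 * {ffun 'I_N.+1 -> 'I_n.+1})%type.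

Definition word_val (w : word) (x : 'rV[R]_n.+1) : R :=
  \prod_(r < N.+1 | (r < w.1)%N) x 0 (w.2 r).

Lemma elementary_word_val w : elementary (word_val w).
Proof.
have -> : word_val w =
    fun x => \prod_(r < N.+1) if (r < w.1)%N then x 0 (w.2 r) else 1.
  by apply/funext => x; rewrite /word_val big_mkcond.
apply: elementary_prod => r.
by case: (r < w.1)%N; [exact: elementary_coord|exact: elementary_cst].
Qed.

Lemma derive_word_val e I x v : 'D_v (word_val (e, I)) x =
  \sum_(r < N.+1 | (r < e)%N) v 0 (I r) *
     \prod_(r' < N.+1 | (r' < e)%N && (r' != r)) x 0 (I r').
Proof.
have -> : word_val (e, I) =
    fun y => \prod_(r <- [seq r : 'I_N.+1 <- index_enum 'I_N.+1 | (r < e)%N]) y 0 (I r).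
  by apply/funext => y; rewrite /word_val big_filter.
rewrite derive_prod => [|//|i]; last exact: differentiable_coord.
  by rewrite big_filter; apply: eq_bigr => r _; rewrite derive_coord big_filter_cond.
exact/filter_uniq/index_enum_uniq.
Qed.

Definition set_letter (I : {ffun 'I_N.+1 -> 'I_n.+1}) (r : 'I_N.+1) (k : 'I_n.+1) :
  {ffun 'I_N.+1 -> 'I_n.+1} := [ffun r' => if r' == r then k else I r'].

Lemma set_letter_sym (I K : {ffun 'I_N.+1 -> 'I_n.+1}) r :
  (K == set_letter I r (K r)) = (I == set_letter K r (I r)).
Proof.
by apply/eqP/eqP => E; apply/ffunP => r'; rewrite ffunE E ffunE; case: eqP => [->|].
Qed.

Lemma sum_set_letter I r (F : {ffun 'I_N.+1 -> 'I_n.+1} -> R) :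
  \sum_(K : {ffun 'I_N.+1 -> 'I_n.+1}) (K == set_letter I r (K r))%:R * F K =
  \sum_k F (set_letter I r k).
Proof.
under [RHS]eq_bigr => k _ do rewrite -(sum_indicator (set_letter I r k) F).
rewrite exchange_big /=; apply: eq_bigr => K _; rewrite -mulr_suml; congr (_ * _).
rewrite (bigD1 (K r)) //= big1 ?addr0 // => k kKr; case: eqP => // E.
by move: kKr; rewrite E ffunE eqxx eqxx.
Qed.

Lemma word_val_set_letter (e : 'I_N.+2) I (r : 'I_N.+1) k x : (r < e)%N ->
  word_val (e, set_letter I r k) x =
  x 0 k * \prod_(r' < N.+1 | (r' < e)%N && (r' != r)) x 0 (I r').
Proof.
move=> re; rewrite /word_val /= (bigD1 r) //= ffunE eqxx; congr (_ * _).
by apply: eq_bigr => r' /andP[_ /negbTE r'r]; rewrite ffunE r'r.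
Qed.

Definition letters (al : 'I_n.+1 -> nat) (k : 'I_n.+1) : seq 'I_n.+1 :=
  k :: flatten [seq nseq (al i) i | i <- index_enum 'I_n.+1].

Lemma size_letters al k : size (letters al k) = (\sum_i al i).+1.
Proof.
rewrite /= size_flatten /shape -map_comp sumnE big_map; congr S.
by apply: eq_bigr => i _; rewrite /= size_nseq.
Qed.

Definition mono_word (al : 'I_n.+1 -> nat) (k : 'I_n.+1) : word :=
  (inord (\sum_i al i).+1, [ffun r : 'I_N.+1 => nth k (letters al k) r]).

Lemma word_val_mono_word al k x : (\sum_i al i <= N)%N ->
  word_val (mono_word al k) x = x 0 k * monom al x.
Proof.
move=> alN; rewrite /word_val /= inordK ?ltnS //.
under eq_bigr do rewrite ffunE.
rewrite -(big_ord_widen _ (fun r => x 0 (nth k (letters al k) r))) ?ltnS //.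
rewrite -(size_letters al k) -(big_mkord xpredT (fun r => x 0 (nth k (letters al k) r))).
rewrite -(big_nth k xpredT (fun j => x 0 j)) big_cons big_flatten /= big_map.
congr (_ * _); apply: eq_bigr => i _.
by elim: (al i) => [|a IH]; rewrite ?big_nil ?expr0 //= big_cons IH exprS.
Qed.

End Words.

Lemma tangent_bracket (R : realType) n (x v : 'rV[R]_n) i :
  dotv x x = 1 -> dotv x v = 0 ->
  \sum_k (v 0 i * x 0 k - v 0 k * x 0 i) * x 0 k = v 0 i.
Proof.
rewrite /dotv => xx1 xv0.
transitivity (v 0 i * (\sum_k x 0 k * x 0 k) - (\sum_k x 0 k * v 0 k) * x 0 i).
  by rewrite mulr_sumr mulr_suml -sumrB; apply: eq_bigr => k _; ring.
by rewrite xx1 xv0 mulr1 mul0r subr0.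
Qed.

Section SphereField.
Variables (R : realType) (n N : nat).
Variable s : seq ('rV[R]_n.+1 * ('I_n.+1 -> nat)).
Hypothesis s_deg : all (fun p => (\sum_i p.2 i <= N)%N) s.

Definition poly_field (x : 'rV[R]_n.+1) : 'rV[R]_n.+1 := \sum_(p <- s) monom p.2 x *: p.1.

Definition bracket_coef (i k : 'I_n.+1) (J : word n N) : R :=
  \sum_(p <- s)
    (p.1 0 i * (J == mono_word N p.2 k)%:R - p.1 0 k * (J == mono_word N p.2 i)%:R).

Lemma bracket_coef_skew i k J : bracket_coef i k J = - bracket_coef k i J.
Proof. by rewrite /bracket_coef -sumrN; apply: eq_bigr => p _; rewrite opprB. Qed.

Lemma bracket_coef_sum i k x :
  \sum_J bracket_coef i k J * word_val J x =
  poly_field x 0 i * x 0 k - poly_field x 0 k * x 0 i.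
Proof.
rewrite /bracket_coef /poly_field !summxE.
under eq_bigr do rewrite mulr_suml.
rewrite exchange_big /= !mulr_suml -sumrB big_seq [RHS]big_seq.
apply: eq_bigr => p ps; have pN := allP s_deg p ps.
under eq_bigr do rewrite mulrBl -!mulrA.
rewrite sumrB -!mulr_sumr !sum_indicator !word_val_mono_word // !mxE.
by ring.
Qed.

(* Differentiating a word along X replaces one letter x_(I r) by
   X_(I r) = sum_k (X_(I r) x_k - X_k x_(I r)) x_k, giving the words with
   letter r set to k. *)
Definition sphere_coef (w1 w2 J : word n N) : R :=
  (w1.1 == w2.1)%:R *
  \sum_(r < N.+1 | (r < w1.1)%N)
     (w2.2 == set_letter w1.2 r (w2.2 r))%:R * bracket_coef (w1.2 r) (w2.2 r) J.

Lemma sphere_coef_skew w1 w2 J : sphere_coef w1 w2 J = - sphere_coef w2 w1 J.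
Proof.
rewrite /sphere_coef eq_sym; case: eqP => [->|_]; last by rewrite !mul0r oppr0.
rewrite !mul1r -sumrN; apply: eq_bigr => r _.
by rewrite set_letter_sym bracket_coef_skew mulrN.
Qed.

Lemma derive_word_val_field x e I :
  on_sphere x -> dotv x (poly_field x) = 0 ->
  'D_(poly_field x) (word_val (e, I)) x =
  \sum_K (\sum_J sphere_coef (e, I) K J * word_val J x) * word_val K x.
Proof.
move=> x1 Xt.
pose A i k := poly_field x 0 i * x 0 k - poly_field x 0 k * x 0 i.
have inner e' K : \sum_J sphere_coef (e, I) (e', K) J * word_val J x =
    (e' == e)%:R *
    \sum_(r < N.+1 | (r < e)%N) (K == set_letter I r (K r))%:R * A (I r) (K r).
  rewrite /sphere_coef /= eq_sym.
  under eq_bigr do rewrite -mulrA mulr_suml.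
  rewrite -mulr_sumr exchange_big /=; congr (_ * _); apply: eq_bigr => r _.
  by under eq_bigr do rewrite -mulrA; rewrite -mulr_sumr bracket_coef_sum.
rewrite derive_word_val sum_pair; symmetry.
under eq_bigr => e' _ do under eq_bigr => K _ do rewrite inner -mulrA.
under eq_bigr => e' _ do rewrite -mulr_sumr.
rewrite sum_indicator.
under eq_bigr => K _ do rewrite big_distrl.
rewrite exchange_big /=; apply: eq_bigr => r re.
under eq_bigr => K _ do rewrite -mulrA.
rewrite (sum_set_letter I r (fun K => A (I r) (K r) * word_val (e, K) x)).
transitivity (\sum_k (A (I r) k * x 0 k) *
   \prod_(r' < N.+1 | (r' < e)%N && (r' != r)) x 0 (I r')).
  by apply: eq_bigr => k _; rewrite /= word_val_set_letter // ffunE eqxx mulrA.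
by rewrite -mulr_suml tangent_bracket.
Qed.

End SphereField.

Lemma word_val_letter (R : realType) n N (i : 'I_n.+1) :
  @word_val R n N (inord 1, [ffun => i]) = fun x => x 0 i.
Proof.
apply/funext => x; rewrite /word_val /= inordK // (bigD1 ord0) //= ffunE big1 ?mulr1 //.
by move=> r /andP[]; rewrite ltnS leqn0 -val_eqE => ->.
Qed.

Lemma sphere_embedding_twin (R : realType) n N :
  sphere_embedding (twin_map (@word_val R n N)).
Proof.
have word_elem := @elementary_word_val R n N.
split.
- exact: smooth_twin_map.
- move=> x y _ _ /(twin_map_eq (phi := @word_val R n N)) E; apply/rowP => i.
  by have := E (inord 1, [ffun => i]); rewrite word_val_letter.
- move=> x v _ _ /(derive_twin_map_eq0 word_elem) D0; apply/rowP => i.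
  by have := D0 (inord 1, [ffun => i]); rewrite word_val_letter derive_coord mxE.
Qed.

Theorem proposition2p1 (R : realType) (n N : nat) :
  (* M = T^n *)
  (exists d : nat, forall X : 'rV[R]_n -> 'rV[R]_n,
     torus_polynomic_le N X ->
     exists (Psi : 'rV[R]_n -> 'rV[R]_d) (B : 'I_d -> 'I_d -> 'I_d -> R),
       [/\ torus_embedding Psi,
           skewB B,
           (forall g : R -> 'rV[R]_n, integral_curve X g ->
              forall t : R, is_derive t 1 (Psi \o g) (quadV B (Psi (g t)))) &
           (torus_div_free X -> forall y, divergence (quadV B) y = 0)])
  /\
  (* M = S^n *)
  (exists d : nat, forall X : 'rV[R]_n.+1 -> 'rV[R]_n.+1,
     sphere_polynomic_le N X ->
     exists (Psi : 'rV[R]_n.+1 -> 'rV[R]_d) (B : 'I_d -> 'I_d -> 'I_d -> R),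
       [/\ sphere_embedding Psi,
           skewB B,
           (forall g : R -> 'rV[R]_n.+1, sphere_integral_curve X g ->
              forall t : R, is_derive t 1 (Psi \o g) (quadV B (Psi (g t)))) &
           (sphere_div_free X -> forall y, divergence (quadV B) y = 0)]).
Proof.
split.
- exists #|{: bool * (bool * freq n N)}| => X [s [s_freq /funext ->]].
  exists (twin_map (@torus_mode R n N)), (twin_coef (torus_coef s)); split.
  + exact: torus_embedding_twin.
  + exact/twin_coef_skew/torus_coef_skew.
  + move=> g g_curve t; apply: is_derive_twin_map (g_curve t) => [|[b l]].
      exact: elementary_torus_mode.
    exact: derive_torus_mode_field.
  + by move=> _ y; apply/divergence_quadV_twin/torus_coef_skew.
- exists #|{: bool * word n N}| => X [[s [s_deg /funext ->]] X_tangent].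
  exists (twin_map (@word_val R n N)), (twin_coef (sphere_coef s)); split.
  + exact: sphere_embedding_twin.
  + exact/twin_coef_skew/sphere_coef_skew.
  + move=> g g_curve t; have [g_sphere g'] := g_curve t.
    apply: is_derive_twin_map g' => [|[e I]]; first exact: elementary_word_val.
    exact: derive_word_val_field (X_tangent _ g_sphere).
  + by move=> _ y; apply/divergence_quadV_twin/sphere_coef_skew.
Qed.
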